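(* Let $m\ge 2$, $n\ge 2$, and let $P:[m]\times[m]\to\mathbb{R}\mathrm{P}^n$ be a Q-net. Suppose that for every $d\in[m-1]$ the iterated Laplace transforms $\mathcal{L}_A^dP,\ \mathcal{L}_B^dP:[m-d]\times[m-d]\to\mathbb{R}\mathrm{P}^n$ are well-defined Q-nets. Then $\mathcal{L}_A^{m-1}P$ and $\mathcal{L}_B^{m-1}P$ are two points (each is defined on the one-element set $[1]\times[1]$). Suppose moreover that all points $P_{i,j}$ with $(i,j)\in[m]\times[m]$, $(i,j)\neq(m,m)$, lie on a quadric $\mathcal{Q}\subset\mathbb{R}\mathrm{P}^n$. Then $P_{m,m}\in\mathcal{Q}$ if and only if the points $\mathcal{L}_A^{m-1}P$ and $\mathcal{L}_B^{m-1}P$ are conjugate with respect to $\mathcal{Q}$.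
   Context: $[m]=\{1,\dots,m\}$. $X\vee Y$ denotes the projective join. A Q-net on $D\subset\mathbb{Z}^2$ (here $D=[k]\times[k]$) is a map $P:D\to\mathbb{R}\mathrm{P}^n$ such that for every elementary quad in $D$ the four points $P_{i,j},P_{i+1,j},P_{i+1,j+1},P_{i,j+1}$ are coplanar. Its Laplace points are $A_{i,j}=(P_{i,j}\vee P_{i+1,j})\cap(P_{i,j+1}\vee P_{i+1,j+1})$ and $B_{i,j}=(P_{i,j}\vee P_{i,j+1})\cap(P_{i+1,j}\vee P_{i+1,j+1})$; for $P$ on $[k]\times[k]$ the Laplace transforms are $\mathcal{L}_AP(i,j)=A_{i,j}$, $\mathcal{L}_BP(i,j)=B_{i,j}$ on $[k-1]\times[k-1]$, and $\mathcal{L}_A^d,\mathcal{L}_B^d$ denote $d$-fold iterates. A quadric is $\mathcal{Q}=\{[x]:\varphi(x,x)=0\}$ for a nonzero symmetric bilinear form $\varphi$ on $\mathbb{R}^{n+1}$; points $[x],[y]$ are conjugate w.r.t. $\mathcal{Q}$ if $\varphi(x,y)=0$. Standing assumption of the paper: all data are generic (in general position subject to the stated constraints; e.g. vertices of each quad distinct, no three collinear). *)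

From HB Require Import structures.
From mathcomp Require Import all_boot all_order all_algebra.
From mathcomp Require Import reals.
Set Implicit Arguments. Unset Strict Implicit. Unset Printing Implicit Defensive.
Import Order.TTheory GRing.Theory Num.Theory.
Local Open Scope ring_scope.

(* A point of RP^n is represented by a (nonzero) homogeneous coordinate
   vector in R^(n+1); every notion below is invariant under rescaling. *)
Definition pt (R : realType) (n : nat) := 'rV[R]_(n.+1).

(* A net on [k] x [k] (1-based indices (i,j), 1 <= i,j <= k). *)
Definition net (R : realType) (n : nat) := nat -> nat -> pt R n.

Definition in_range (k i : nat) : bool := (1 <= i <= k)%N.

Definition coplanar4 (R : realType) (n : nat) (a b c d : pt R n) : bool :=
  (\rank (col_mx a (col_mx b (col_mx c d))) <= 3)%N.

Definition noncollinear3 (R : realType) (n : nat) (a b c : pt R n) : bool :=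
  \rank (col_mx a (col_mx b c)) == 3%N.

Definition Qnet (R : realType) (n k : nat) (P : net R n) : Prop :=
  (forall i j, in_range k i -> in_range k j -> P i j != 0) /\
  (forall i j, in_range k.-1 i -> in_range k.-1 j ->
     coplanar4 (P i j) (P i.+1 j) (P i.+1 j.+1) (P i j.+1)).

(* Standing genericity assumption (as made explicit in the paper):
   no three vertices of an elementary quad are collinear (in particular
   the vertices are distinct). *)
Definition generic_net (R : realType) (n k : nat) (P : net R n) : Prop :=
  forall i j, in_range k.-1 i -> in_range k.-1 j ->
    let a := P i j in let b := P i.+1 j in
    let c := P i.+1 j.+1 in let d := P i j.+1 in
    [&& noncollinear3 a b c, noncollinear3 a b d,
        noncollinear3 a c d & noncollinear3 b c d].

(* L is the Laplace transform L_A of the net P on [k] x [k]: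
   L i j (for (i,j) in [k-1]^2) is the intersection point of the lines
   P_{i,j} v P_{i+1,j} and P_{i,j+1} v P_{i+1,j+1}. *)
Definition laplaceA (R : realType) (n k : nat) (P L : net R n) : Prop :=
  forall i j, in_range k.-1 i -> in_range k.-1 j ->
    [/\ L i j != 0,
        (L i j <= col_mx (P i j) (P i.+1 j))%MS &
        (L i j <= col_mx (P i j.+1) (P i.+1 j.+1))%MS].

(* L is the Laplace transform L_B of P: L i j is the intersection of the
   lines P_{i,j} v P_{i,j+1} and P_{i+1,j} v P_{i+1,j+1}. *)
Definition laplaceB (R : realType) (n k : nat) (P L : net R n) : Prop :=
  forall i j, in_range k.-1 i -> in_range k.-1 j ->
    [/\ L i j != 0,
        (L i j <= col_mx (P i j) (P i j.+1))%MS &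
        (L i j <= col_mx (P i.+1 j) (P i.+1 j.+1))%MS].

Definition bform (R : realType) (n : nat) (M : 'M[R]_(n.+1)) (x y : pt R n) : R :=
  (x *m M *m y^T) 0 0.

Definition quadric_form (R : realType) (n : nat) (M : 'M[R]_(n.+1)) : Prop :=
  M^T = M /\ M != 0.

Definition on_quadric (R : realType) (n : nat) (M : 'M[R]_(n.+1)) (x : pt R n) : Prop :=
  bform M x x = 0.

Definition conjugate (R : realType) (n : nat) (M : 'M[R]_(n.+1)) (x y : pt R n) : Prop :=
  bform M x y = 0.

(* By induction on l, phi(L_A^l P_{i,j}, L_B^l P_{i,j}) is a nonzero
   multiple of phi(P_{i+l,j+l}, P_{i+l,j+l}).  Let a, b, c, d be the quad at
   (i,j), (i+1,j), (i+1,j+1), (i,j+1) of L_A^l P, with A-point U = al a + be b =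
   ga d + de c, and a', b', c', d' the same quad of L_B^l P, with B-point
   W = al' a' + be' d' = ga' b' + de' c'.  Expanding phi(de c, de' c') with
   de c = U - ga d and de' c' = W - ga' b' gives
     phi(U, W) + phi(al a - ga d, al' a' - ga' b')
       = al al' phi(a, a') + ga be' phi(d, d') + be ga' phi(b, b') + de de' phi(c, c').
   The vector al a - ga d = de c - be b lies on the lines a v d and b v c, so it is
   a multiple of the B-point of the quad, which is a point of L_A^(l-1) P because
   L_B L_A is the shift; symmetrically for al' a' - ga' b'.  Away from the corner
   (m,m) all terms but the last vanish by induction.  For l = 0 both nets are P,
   the second term is phi(U, W) again, and 2 phi(U, W) = de de' phi(c, c). *)

From HB Require Import structures.
From mathcomp Require Import all_boot all_order all_algebra.
From mathcomp Require Import reals.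
From mathcomp Require Import zify.
From mathcomp.algebra_tactics Require Import ring.
Import Order.TTheory GRing.Theory Num.Theory.
Local Open Scope ring_scope.

Section Lines.
#[local] Set Implicit Arguments.
#[local] Unset Strict Implicit.
Variables (R : realType) (n : nat).
Implicit Types (a b c d u v w z : pt R n).

(* The row space of [col_mx a b] is the projective line through [a] and [b]. *)

Lemma noncollinear3E a b c : noncollinear3 a b c = (\rank (a + b + c) == 3)%N.
Proof. by rewrite -addsmxA (adds_eqmx (eqmx_refl a) (addsmxE b c)) addsmxE. Qed.

Lemma noncollinear3_swapl a b c : noncollinear3 a b c = noncollinear3 b a c.
Proof. by rewrite !noncollinear3E (addsmxC a). Qed.

Lemma noncollinear3_swapr a b c : noncollinear3 a b c = noncollinear3 a c b.
Proof. by rewrite !noncollinear3E -!addsmxA (addsmxC b). Qed.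

Lemma noncollinear3_rank_line a b c : noncollinear3 a b c -> (\rank (col_mx a b) = 2)%N.
Proof.
rewrite noncollinear3E -addsmxE => /eqP rk3.
have := leq_of_leqif (mxrank_adds_leqif (a + b)%MS c).
have := rank_leq_row c; have := rank_leq_row (col_mx a b).
by rewrite rk3 -addsmxE; lia.
Qed.

Lemma noncollinear3_notin_line a b c : noncollinear3 a b c -> ~~ (c <= col_mx a b)%MS.
Proof.
rewrite noncollinear3E -addsmxE => /eqP rk3; apply/negP => /addsmx_idPl sub.
by have := rank_leq_row (col_mx a b); rewrite -addsmxE -sub rk3.
Qed.

Lemma sub_lineP v a b :
  reflect (exists x y, v = x *: a + y *: b) (v <= col_mx a b)%MS.
Proof.
apply: (iffP idP) => [/submxP [D ->] | [x [y ->]]].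
  exists (lsubmx D 0 0), (rsubmx D 0 0).
  by rewrite -[D]hsubmxK mul_row_col -!mul_scalar_mx -!mx11_scalar row_mxKl row_mxKr.
by rewrite -addsmxE addmx_sub ?scalemx_sub ?addsmxSl ?addsmxSr.
Qed.

Lemma line_coords_inj a b (x y x' y' : R) : (\rank (col_mx a b) = 2)%N ->
  x *: a + y *: b = x' *: a + y' *: b -> x = x' /\ y = y'.
Proof.
move=> rk2; have free : row_free (col_mx a b) by rewrite /row_free rk2.
have comb (u w : R) : u *: a + w *: b = row_mx u%:M w%:M *m col_mx a b.
  by rewrite mul_row_col !mul_scalar_mx.
rewrite !comb => /(row_free_inj free)/eq_row_mx [].
by move=> /matrixP/(_ 0 0) + /matrixP/(_ 0 0); rewrite !mxE !mulr1n => -> ->.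
Qed.

Lemma line_subl a b : (a <= col_mx a b)%MS.
Proof. by rewrite -addsmxE addsmxSl. Qed.

Lemma line_subr a b : (b <= col_mx a b)%MS.
Proof. by rewrite -addsmxE addsmxSr. Qed.

Lemma line_through u w a b : (\rank (col_mx u w) = 2)%N ->
  (u <= col_mx a b)%MS -> (w <= col_mx a b)%MS -> (col_mx a b <= col_mx u w)%MS.
Proof.
move=> rk2 ua wa; have sub : (col_mx u w <= col_mx a b)%MS by rewrite col_mx_sub ua.
by rewrite -(geq_leqif (mxrank_leqif_sup sub)) rk2 rank_leq_row.
Qed.

Lemma lines_meet_sub a b c d z v : noncollinear3 a b c -> z != 0 ->
  (z <= col_mx a b)%MS -> (z <= col_mx c d)%MS ->
  (v <= col_mx a b)%MS -> (v <= col_mx c d)%MS -> (v <= z)%MS.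
Proof.
move=> nc z0 za zc va vc; set S := (col_mx a b :&: col_mx c d)%MS.
have rkS : (\rank S <= 1)%N.
  have rk3 : (3 <= \rank (col_mx a b + col_mx c d))%N.
    move: nc; rewrite noncollinear3E => /eqP <-.
    by rewrite mxrankS // addsmxS ?line_subl // addsmxE.
  rewrite -(leq_add2l (\rank (col_mx a b + col_mx c d))) mxrank_sum_cap.
  apply: leq_trans (leq_add (rank_leq_row _) (rank_leq_row _)) _.
  exact: leq_add rk3 (leqnn 1).
have zS : (z <= S)%MS by rewrite sub_capmx za zc.
have /eqmxP -> : (z == S)%MS.
  by rewrite -(eq_leqif (mxrank_leqif_eq zS)) eqn_leq mxrankS // rank_rV z0.
by rewrite sub_capmx va vc.
Qed.

Lemma line_coord_neq0 m (L : 'M[R]_(m, n.+1)) u a b (x y : R) :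
  u != 0 -> u = x *: a + y *: b -> (u <= L)%MS -> ~~ (b <= L)%MS -> x != 0.
Proof.
move=> u0 ux uL; apply: contraNneq => x0; move: u0 uL.
rewrite ux x0 scale0r add0r scaler_eq0 negb_or => /andP [y0 _].
by rewrite (eqmx_scale _ y0).
Qed.
End Lines.

Section BilinearForm.
#[local] Set Implicit Arguments.
#[local] Unset Strict Implicit.
Variables (R : realType) (n : nat) (M : 'M[R]_n.+1).
Implicit Types (x y z : pt R n) (k : R).

Lemma bformDl x y z : bform M (x + y) z = bform M x z + bform M y z.
Proof. by rewrite /bform !mulmxDl mxE. Qed.

Lemma bformDr x y z : bform M z (x + y) = bform M z x + bform M z y.
Proof. by rewrite /bform raddfD /= mulmxDr mxE. Qed.

Lemma bformZl k x z : bform M (k *: x) z = k * bform M x z.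
Proof. by rewrite /bform -!scalemxAl mxE. Qed.

Lemma bformZr k x z : bform M z (k *: x) = k * bform M z x.
Proof. by rewrite /bform linearZ /= -scalemxAr mxE. Qed.

Lemma bformNl x z : bform M (- x) z = - bform M x z.
Proof. by rewrite -scaleN1r bformZl mulN1r. Qed.

Lemma bformNr x z : bform M z (- x) = - bform M z x.
Proof. by rewrite -scaleN1r bformZr mulN1r. Qed.

Lemma bformC x y : M^T = M -> bform M x y = bform M y x.
Proof.
move=> sym; rewrite /bform -[in RHS](trmxK (y *m M *m x^T)).
by rewrite [in RHS]mxE !trmx_mul trmxK sym mulmxA.
Qed.
End BilinearForm.

Section Quads.
#[local] Set Implicit Arguments.
#[local] Unset Strict Implicit.
Variables (R : realType) (n : nat).
Implicit Types (a b c d u w z : pt R n).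

Definition generic_quad a b c d : bool :=
  [&& noncollinear3 a b c, noncollinear3 a b d,
      noncollinear3 a c d & noncollinear3 b c d].

(* [a b c d] is the quad P_{i,j}, P_{i+1,j}, P_{i+1,j+1}, P_{i,j+1}: its Laplace
   point A is [laplace_point a b c d], its Laplace point B is [laplace_point a d c b]. *)
Definition laplace_point a b c d u : Prop :=
  [/\ u != 0, (u <= col_mx a b)%MS & (u <= col_mx d c)%MS].

Lemma generic_quad_transpose a b c d : generic_quad a b c d -> generic_quad a d c b.
Proof.
case/and4P => nabc nabd nacd nbcd.
by rewrite /generic_quad -noncollinear3_swapr nacd -noncollinear3_swapr nabd
  -noncollinear3_swapr nabc noncollinear3_swapl -noncollinear3_swapr
  -noncollinear3_swapl nbcd.
Qed.

Lemma laplace_point_coords a b c d u z :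
  generic_quad a b c d -> laplace_point a b c d u -> laplace_point a d c b z ->
  exists al be ga de ka : R, [/\ u = al *: a + be *: b, u = ga *: d + de *: c,
    al != 0, de != 0 & al *: a - ga *: d = ka *: z].
Proof.
case/and4P => _ nabd _ nbcd [u0 uab udc] [z0 zad zbc].
have [al [be ua]] := sub_lineP u a b uab.
have [ga [de ud]] := sub_lineP u d c udc.
have al0 : al != 0.
  apply: line_coord_neq0 u0 ua udc _; rewrite noncollinear3_notin_line //.
  by rewrite noncollinear3_swapl -noncollinear3_swapr noncollinear3_swapl.
have de0 : de != 0.
  by rewrite (line_coord_neq0 u0 (etrans ud (addrC _ _)) uab (noncollinear3_notin_line nabd)).
have ad_bc : al *: a - ga *: d = de *: c - be *: b.
  have -> : al *: a = u - be *: b by rewrite ua addrK.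
  have -> : de *: c = u - ga *: d by rewrite ud addrC addKr.
  exact: addrAC.
have /sub_rVP [ka eka] : (al *: a - ga *: d <= z)%MS.
  apply: (lines_meet_sub _ z0 zad zbc).
  - by rewrite -noncollinear3_swapr.
  - by apply/sub_lineP; exists al, (- ga); rewrite scaleNr.
  - by apply/sub_lineP; exists (- be), de; rewrite ad_bc scaleNr addrC.
by exists al, be, ga, de, ka.
Qed.

Lemma bform_laplace_polar M a b c d a' b' c' d' u w
    (al be ga de al' be' ga' de' : R) :
  u = al *: a + be *: b -> u = ga *: d + de *: c ->
  w = al' *: a' + be' *: d' -> w = ga' *: b' + de' *: c' ->
  bform M u w + bform M (al *: a - ga *: d) (al' *: a' - ga' *: b') =
  al * al' * bform M a a' + ga * be' * bform M d d' + be * ga' * bform M b b'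
  + de * de' * bform M c c'.
Proof.
move=> ua ud wa wb.
have -> : de * de' * bform M c c' = bform M (u - ga *: d) (w - ga' *: b').
  by rewrite ud wb (addrC (ga *: d)) (addrC (ga' *: b')) !addrK bformZl bformZr mulrA.
by rewrite ua wa !(bformDl, bformDr, bformZl, bformZr, bformNl, bformNr); ring.
Qed.

Lemma bform_laplace_step M a b c d a' b' c' d' u w z z' :
  generic_quad a b c d -> generic_quad a' b' c' d' ->
  laplace_point a b c d u -> laplace_point a' d' c' b' w ->
  laplace_point a d c b z -> laplace_point a' b' c' d' z' ->
  bform M z z' = 0 ->
  bform M a a' = 0 -> bform M b b' = 0 -> bform M d d' = 0 ->
  exists2 k : R, k != 0 & bform M u w = k * bform M c c'.
Proof.
move=> g g' pu pw pz pz' zz' aa' bb' dd'.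
have [al [be [ga [de [ka [ua ud _ de0 uz]]]]]] := laplace_point_coords g pu pz.
have [al' [be' [ga' [de' [ka' [wa wb _ de0' wz]]]]]] :=
  laplace_point_coords (generic_quad_transpose g') pw pz'.
exists (de * de'); first by rewrite mulf_neq0.
have := bform_laplace_polar M ua ud wa wb.
by rewrite uz wz bformZl bformZr zz' aa' bb' dd' !mulr0 !addr0 !add0r.
Qed.

Lemma bform_laplace_step0 M a b c d u w : M^T = M ->
  generic_quad a b c d -> laplace_point a b c d u -> laplace_point a d c b w ->
  bform M a a = 0 -> bform M b b = 0 -> bform M d d = 0 ->
  exists2 k : R, k != 0 & bform M u w = k * bform M c c.
Proof.
move=> sym g pu pw aa bb dd.
have [al [be [ga [de [ka [ua ud al0 de0 uw]]]]]] := laplace_point_coords g pu pw.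
have [al' [be' [ga' [de' [ka' [wa wb _ de0' wu]]]]]] :=
  laplace_point_coords (generic_quad_transpose g) pw pu.
case/and4P: g => _ nabd _ _.
have nadb : noncollinear3 a d b by rewrite -noncollinear3_swapr.
have [al_ _] : al = ka * al' /\ - ga = ka * be'.
  apply: line_coords_inj (noncollinear3_rank_line nadb) _.
  by rewrite scaleNr uw wa scalerDr !scalerA.
have [al'_ _] : al' = ka' * al /\ - ga' = ka' * be.
  apply: line_coords_inj (noncollinear3_rank_line nabd) _.
  by rewrite scaleNr wu ua scalerDr !scalerA.
have kk : ka * ka' = 1 by apply: (mulIf al0); rewrite mul1r -mulrA -al'_ -al_.
exists (de * de' / 2); first by rewrite !mulf_neq0 ?invr_eq0 ?pnatr_eq0.
have := bform_laplace_polar M ua ud wa wb.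
rewrite uw wu bformZl bformZr (bformC _ _ sym) aa bb dd !mulr0 !add0r mulrA kk mul1r.
by move=> E; rewrite mulrAC -E; field.
Qed.
End Quads.

Section Nets.
#[local] Set Implicit Arguments.
#[local] Unset Strict Implicit.
Variables (R : realType) (n : nat) (k : nat).
Implicit Types (P L : net R n).

Lemma in_rangeW (p i : nat) : in_range p i -> in_range p.+1 i.
Proof. by rewrite /in_range; lia. Qed.

Lemma in_rangeS (p i : nat) : in_range p i -> in_range p.+1 i.+1.
Proof. by rewrite /in_range; lia. Qed.

Definition shift_net P : net R n := fun i j => P i.+1 j.+1.

Lemma laplaceA_laplaceB_shift P L :
  (forall i j, in_range k.+2 i -> in_range k.+2 j -> P i j != 0) ->
  laplaceA k.+2 P L -> generic_net k.+1 L -> laplaceB k.+1 L (shift_net P).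
Proof.
move=> P0 LP GL i j ri rj.
have [_ _ Lij] := LP i j (in_rangeW ri) (in_rangeW rj).
have [_ Lij1 _] := LP i j.+1 (in_rangeW ri) (in_rangeS rj).
have [_ _ Li1j] := LP i.+1 j (in_rangeS ri) (in_rangeW rj).
have [_ Li1j1 _] := LP i.+1 j.+1 (in_rangeS ri) (in_rangeS rj).
case/and4P: (GL i j ri rj) => _ nabd _ nbcd.
rewrite -noncollinear3_swapr in nabd.
split; first exact: P0 (in_rangeS (in_rangeW ri)) (in_rangeS (in_rangeW rj)).
- apply: submx_trans (line_through (noncollinear3_rank_line nabd) Lij Lij1).
  exact: line_subr.
- apply: submx_trans (line_through (noncollinear3_rank_line nbcd) Li1j Li1j1).
  exact: line_subl.
Qed.

Lemma laplaceB_laplaceA_shift P L :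
  (forall i j, in_range k.+2 i -> in_range k.+2 j -> P i j != 0) ->
  laplaceB k.+2 P L -> generic_net k.+1 L -> laplaceA k.+1 L (shift_net P).
Proof.
move=> P0 LP GL i j ri rj.
have [_ _ Lij] := LP i j (in_rangeW ri) (in_rangeW rj).
have [_ Li1j _] := LP i.+1 j (in_rangeS ri) (in_rangeW rj).
have [_ _ Lij1] := LP i j.+1 (in_rangeW ri) (in_rangeS rj).
have [_ Li1j1 _] := LP i.+1 j.+1 (in_rangeS ri) (in_rangeS rj).
case/and4P: (GL i j ri rj) => nabc _ _ nbcd.
have ndcb : noncollinear3 (L i j.+1) (L i.+1 j.+1) (L i.+1 j).
  by rewrite noncollinear3_swapl -noncollinear3_swapr noncollinear3_swapl.
split; first exact: P0 (in_rangeS (in_rangeW ri)) (in_rangeS (in_rangeW rj)).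
- apply: submx_trans (line_through (noncollinear3_rank_line nabc) Lij Li1j).
  exact: line_subr.
- apply: submx_trans (line_through (noncollinear3_rank_line ndcb) Lij1 Li1j1).
  exact: line_subl.
Qed.
End Nets.

Ltac range_lia := unfold in_range in *; rewrite ?xpair_eqE; lia.

Section Iteration.
Variables (R : realType) (m n : nat) (P : net R n) (LA LB : nat -> net R n).
Variable M : 'M[R]_n.+1.
Hypotheses (m_ge2 : (2 <= m)%N) (QP : Qnet m P) (GP : generic_net m P).
Hypotheses (LA0 : LA 0%N = P) (LB0 : LB 0%N = P).
Hypothesis LA_laplace : forall d : nat, (1 <= d <= m.-1)%N ->
  [/\ laplaceA (m - d).+1 (LA d.-1) (LA d), Qnet (m - d) (LA d) & generic_net (m - d) (LA d)].
Hypothesis LB_laplace : forall d : nat, (1 <= d <= m.-1)%N ->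
  [/\ laplaceB (m - d).+1 (LB d.-1) (LB d), Qnet (m - d) (LB d) & generic_net (m - d) (LB d)].
Hypothesis M_sym : M^T = M.
Hypothesis P_on_quadric : forall i j : nat, in_range m i -> in_range m j -> (i, j) != (m, m) ->
  on_quadric M (P i j).

#[local] Set Implicit Arguments.
#[local] Unset Strict Implicit.

Lemma level_nets d : (d <= m.-1)%N ->
  [/\ Qnet (m - d) (LA d), generic_net (m - d) (LA d),
      Qnet (m - d) (LB d) & generic_net (m - d) (LB d)].
Proof.
case: d => [_ | d dm]; first by rewrite LA0 LB0 subn0.
by have [_ ? ?] := LA_laplace d.+1 dm; have [_ ? ?] := LB_laplace d.+1 dm.
Qed.

Definition conj_level d := forall i j, in_range (m - d) i -> in_range (m - d) j ->
  exists2 c : R, c != 0 &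
    bform M (LA d i j) (LB d i j) = c * bform M (P (i + d)%N (j + d)%N) (P (i + d)%N (j + d)%N).

Lemma conj_level_off_corner d i j : conj_level d ->
  in_range (m - d) i -> in_range (m - d) j -> (i, j) != (m - d, m - d)%N ->
  bform M (LA d i j) (LB d i j) = 0.
Proof.
move=> cl ri rj ij; have [c _ ->] := cl i j ri rj.
rewrite P_on_quadric ?mulr0 //; move: ri rj ij; rewrite /in_range ?xpair_eqE; lia.
Qed.

Lemma conj_level0 : conj_level 0.
Proof. by move=> i j _ _; exists 1; rewrite ?oner_neq0 // LA0 LB0 !addn0 mul1r. Qed.

Lemma conj_level1 : conj_level 1.
Proof.
move=> i j ri rj; have m1 : (1 <= 1 <= m.-1)%N by rewrite /=; lia.
have [/= LA1 _ _] := LA_laplace 1 m1; have [/= LB1 _ _] := LB_laplace 1 m1.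
rewrite LA0 in LA1; rewrite LB0 in LB1.
rewrite !addn1; apply: (bform_laplace_step0 M_sym (GP i j _ _) (LA1 i j ri rj) (LB1 i j ri rj));
  by [range_lia | apply: P_on_quadric; range_lia].
Qed.

Lemma conj_levelSS d : (d.+2 <= m.-1)%N ->
  conj_level d -> conj_level d.+1 -> conj_level d.+2.
Proof.
move=> dm cl0 cl1 i j ri rj; set k := (m - d.+2)%N in ri rj.
have ek1 : (m - d.+1 = k.+1)%N by rewrite /k; lia.
have ek2 : (m - d = k.+2)%N by rewrite /k; lia.
have [LA2 _ _] := LA_laplace d.+2 dm; have [LB2 _ _] := LB_laplace d.+2 dm.
have [/= + _ _] := LA_laplace d.+1 (ltnW dm); rewrite ek1 => LA1.
have [/= + _ _] := LB_laplace d.+1 (ltnW dm); rewrite ek1 => LB1.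
have [[A0 _] _ [B0 _] _] := level_nets (ltnW (ltnW dm)); rewrite ek2 in A0 B0.
have [_ GA1 _ GB1] := level_nets (ltnW dm); rewrite ek1 in GA1 GB1.
have off0 : bform M (LA d i.+1 j.+1) (LB d i.+1 j.+1) = 0.
  by apply: conj_level_off_corner cl0 _ _ _; rewrite ek2; range_lia.
have off1 i' j' : in_range k.+1 i' -> in_range k.+1 j' -> (i', j') != (k.+1, k.+1) ->
    bform M (LA d.+1 i' j') (LB d.+1 i' j') = 0.
  by rewrite -ek1; apply: conj_level_off_corner.
have [c c0 ->] : exists2 c : R, c != 0 & bform M (LA d.+2 i j) (LB d.+2 i j) =
    c * bform M (LA d.+1 i.+1 j.+1) (LB d.+1 i.+1 j.+1).
  apply: (bform_laplace_step (GA1 i j ri rj) (GB1 i j ri rj) (LA2 i j ri rj) (LB2 i j ri rj)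
    (laplaceA_laplaceB_shift A0 LA1 GA1 ri rj) (laplaceB_laplaceA_shift B0 LB1 GB1 ri rj) off0);
  by apply: off1; range_lia.
move: cl1; rewrite /conj_level ek1 => /(_ i.+1 j.+1 (in_rangeS ri) (in_rangeS rj)) [c' c'0 ->].
exists (c * c'); first by rewrite mulf_neq0.
by rewrite mulrA !addSnnS.
Qed.

Lemma conj_levels d : (d <= m.-1)%N -> conj_level d.
Proof.
elim/ltn_ind: d => -[_ _ | [_ _ | d IH dm]]; [exact: conj_level0 | exact: conj_level1 |].
by apply: conj_levelSS => //; apply: IH => //; lia.
Qed.
End Iteration.

Theorem theorem1p1 (R : realType) (m n : nat) (P : net R n)
    (LA LB : nat -> net R n) (M : 'M[R]_(n.+1)) :
  (2 <= m)%N -> (2 <= n)%N ->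
  Qnet m P -> generic_net m P ->
  LA 0%N = P -> LB 0%N = P ->
  (forall d : nat, (1 <= d <= m.-1)%N ->
     [/\ laplaceA (m - d).+1 (LA d.-1) (LA d),
         Qnet (m - d) (LA d) & generic_net (m - d) (LA d)]) ->
  (forall d : nat, (1 <= d <= m.-1)%N ->
     [/\ laplaceB (m - d).+1 (LB d.-1) (LB d),
         Qnet (m - d) (LB d) & generic_net (m - d) (LB d)]) ->
  quadric_form M ->
  (forall i j : nat, in_range m i -> in_range m j -> (i, j) != (m, m) ->
     on_quadric M (P i j)) ->
  (on_quadric M (P m m) <->
   conjugate M (LA m.-1 1%N 1%N) (LB m.-1 1%N 1%N)).
Proof.
move=> m_ge2 _ QP GP LA0 LB0 LA_laplace LB_laplace [M_sym _] P_on_quadric.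
have r1 : in_range (m - m.-1) 1 by rewrite /in_range; lia.
have [c c0 E] := conj_levels m_ge2 QP GP LA0 LB0 LA_laplace LB_laplace M_sym P_on_quadric
  (leqnn m.-1) r1 r1.
rewrite add1n (prednK (ltnW m_ge2)) in E.
rewrite /on_quadric /conjugate E; split => [-> | /eqP]; first by rewrite mulr0.
by rewrite mulf_eq0 (negbTE c0) => /eqP.
Qed.
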